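(* Let $n \ge 3$, let $m \ge 1$ be odd, and let $a,b \in \mathbb{Z}/m$ with $a^2\equiv b^2\equiv 1\bmod m$. Then $Q_{2^n m}\cong C_m\rtimes_{(a,b)} Q_{2^n}$ if and only if $(a,b)\equiv(1,-1)$, $(-1,1)$ or $(-1,-1) \bmod m$ in the case $n=3$, and $(a,b) \equiv (1,-1) \bmod m$ in the case $n\ge 4$.
   Context: $Q_{4k}=\langle x,y\mid x^k=y^2, yxy^{-1}=x^{-1}\rangle$. $C_m\rtimes_{(a,b)}Q_{2^n}$ is the semidirect product in which the generators $x,y$ of $Q_{2^n} = \langle x,y\mid x^{2^{n-2}}=y^2, yxy^{-1}=x^{-1}\rangle$ act on a generator $u$ of $C_m$ by $u\mapsto u^a$ and $u\mapsto u^b$ respectively. *)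

From mathcomp Require Import all_boot all_fingroup.
Set Implicit Arguments.
Unset Strict Implicit.
Unset Printing Implicit Defensive.

(* Write N = 2^(n-2).  The group Q = <X, Y | X^(Nm) = Y^2, X^Y = X^-1> has order 4Nm
   (a concrete model on Z_(2Nm) x bool gives the lower bound); its cyclic subgroup <X>
   has index 2, and every element outside <X> squares to X^(Nm), hence has order
   dividing 4, and inverts <X>.  If Q is isomorphic to C_m x|_(a,b) Q_(4N) = <u, x, y>,
   counting forces #[u] = m and #[x] = 2N.  Being of odd order, u lies in <X>, so x
   and y act on it by +1 or -1; not both trivially, since Y inverts u; and for N > 2
   the element x, of order 2N > 4, lies in <X> and centralises u.  Conversely, for each
   admissible (a, b) explicit words give generators of either group satisfying the
   relations of the other; surjections both ways between finite groups make them
   isomorphic. *)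

From HB Require Import structures.
From mathcomp Require Import all_boot all_fingroup all_algebra cyclic.
From mathcomp Require Import ring zify.
Set Implicit Arguments.
Unset Strict Implicit.
Unset Printing Implicit Defensive.

Local Open Scope group_scope.

Lemma dicyclic_homgP (gT : finGroupType) (G : {set gT}) k :
  reflect (exists X Y, [/\ <[X]> <*> <[Y]> = G, X ^+ k = Y ^+ 2 & X ^ Y^-1 = X^-1])
          (G \homg Grp (x : y : (x ^+ k = y ^+ 2, x ^ y^-1 = x^-1))).
Proof.
apply: (iffP existsP) => [[[X Y]] | [X [Y [defG XkY2 XY]]]].
  by rewrite /= !xpair_eqE => /and3P[/eqP ? /eqP ? /eqP ?]; exists X, Y.
by exists (X, Y); rewrite /= !xpair_eqE defG XkY2 XY !eqxx.
Qed.

Lemma semidirect_homgP (gT : finGroupType) (G : {set gT}) N m a b :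
  reflect (exists u x y, <[u]> <*> <[x]> <*> <[y]> = G /\
             [/\ u ^+ m = 1, x ^+ N = y ^+ 2, x ^ y^-1 = x^-1,
                 u ^ x^-1 = u ^+ a & u ^ y^-1 = u ^+ b])
          (G \homg Grp (u : x : y : (u ^+ m = 1, x ^+ N = y ^+ 2, x ^ y^-1 = x^-1,
                                     u ^ x^-1 = u ^+ a, u ^ y^-1 = u ^+ b))).
Proof.
apply: (iffP existsP) => [[[[u x] y]] | [u [x [y [defG [um xNy2 xy ux uy]]]]]].
  rewrite /= !xpair_eqE => /and3P[/eqP ? /eqP ? /and4P[/eqP ? /eqP ? /eqP ? /eqP ?]].
  by exists u, x, y.
by exists (u, x, y); rewrite /= !xpair_eqE defG um xNy2 xy ux uy !eqxx.
Qed.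

Lemma conjg_cycle (gT : finGroupType) (z c d : gT) :
  c \in <[z]> -> d \in <[z]> -> d ^ c = d.
Proof.
by move=> zc zd; rewrite conjgE -(centsP (cycle_abelian z) c zc d zd) mulKg.
Qed.

Lemma odd_dvdn_pow2 n e : odd n -> n %| 2 ^ e -> n = 1%N.
Proof.
move=> odd_n dvd_n; apply/eqP; rewrite -dvdn1.
by rewrite -(eqnP (coprimeXr e (_ : coprime n 2))) ?coprimen2 // dvdn_gcd dvd_n dvdnn.
Qed.

Section DicyclicRelations.
Variables (gT : finGroupType) (X Y : gT) (k : nat).
Hypotheses (XkY2 : X ^+ k = Y ^+ 2) (XY : X ^ Y^-1 = X^-1).

Lemma conjVY_cycle c : c \in <[X]> -> c ^ Y^-1 = c^-1.
Proof. by case/cycleP=> j ->; rewrite conjXg XY expgVn. Qed.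

Lemma conjY_cycle c : c \in <[X]> -> c ^ Y = c^-1.
Proof.
have XY' : X ^ Y = X^-1 by rewrite -{1}[X]invgK conjVg -XY conjgKV.
by case/cycleP=> j ->; rewrite conjXg XY' expgVn.
Qed.

Lemma expX_k2 : X ^+ (k * 2) = 1.
Proof.
have XkV : (X ^+ k)^-1 = X ^+ k.
  by rewrite -conjVY_cycle ?mem_cycle // XkY2 conjXg conjgE invgK mulgV mulg1.
by rewrite expgM expg2 -{1}XkV mulVg.
Qed.

Lemma order_X_dvd : #[X] %| k * 2.
Proof. by rewrite order_dvdn expX_k2. Qed.

Lemma expY4 : Y ^+ 4 = 1.
Proof. by rewrite (expgM Y 2 2) -XkY2 -expgM expX_k2. Qed.

Lemma norm_cycleX : <[Y]> \subset 'N(<[X]>).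
Proof. by rewrite cycle_subG inE -cycleJ conjY_cycle ?cycle_id // cycleV. Qed.

Lemma mem_dicyclic g : g \in <[X]> <*> <[Y]> ->
  g \in <[X]> \/ exists2 c, c \in <[X]> & g = c * Y.
Proof.
rewrite norm_joinEr ?norm_cycleX // => /mulsgP[c _ Xc /cycleP[j ->] ->].
rewrite (divn_eq j 2) expgD mulnC expgM -XkY2 modn2.
have Xc' : c * (X ^+ k) ^+ (j %/ 2) \in <[X]> by rewrite groupM ?groupX ?cycle_id.
case: (odd j); last by left; rewrite mulg1.
by right; exists (c * (X ^+ k) ^+ (j %/ 2)); rewrite ?mulgA.
Qed.

Lemma expg2_cosetY c : c \in <[X]> -> (c * Y) ^+ 2 = X ^+ k.
Proof.
move=> Xc; rewrite expg2 -{2}(conjgKV Y c) (conjVY_cycle Xc) conjgE !mulgA mulgK mulgV.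
by rewrite mul1g XkY2 expg2.
Qed.

Lemma conj_cosetY c d : c \in <[X]> -> d \in <[X]> -> d ^ (c * Y) = d^-1.
Proof. by move=> Xc Xd; rewrite conjgM (conjg_cycle Xc Xd) conjY_cycle. Qed.

Lemma card_dicyclic_le : #|<[X]> <*> <[Y]>| <= 2 * #[X].
Proof.
apply: (leq_trans (subset_leq_card (_ : _ \subset <[X]> :|: <[X]> :* Y))).
  apply/subsetP=> g /mem_dicyclic[Xg | [c Xc ->]]; rewrite inE ?Xg //.
  by rewrite mem_rcoset mulgK Xc orbT.
by rewrite mul2n -addnn (leq_trans (leq_card_setU _ _)) // card_rcoset.
Qed.

Lemma conj_cycle_dicyclic g d : g \in <[X]> <*> <[Y]> -> d \in <[X]> ->
  d ^ g = d \/ d ^ g = d^-1.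
Proof.
move=> /mem_dicyclic[Xg | [c Xc ->]] Xd; first by left; apply: conjg_cycle Xg Xd.
by right; apply: conj_cosetY.
Qed.

Lemma odd_order_mem_cycle g : g \in <[X]> <*> <[Y]> -> odd #[g] -> g \in <[X]>.
Proof.
case/mem_dicyclic=> [// | [c Xc ->]] odd_g.
have: #[c * Y] %| 4 by rewrite order_dvdn (expgM _ 2 2) expg2_cosetY // -expgM expX_k2.
by move/(odd_dvdn_pow2 (e := 2) odd_g)/eqP; rewrite order_eq1 => /eqP->.
Qed.

Lemma conjVX_Y j : (j * 2 = k)%N -> Y ^ (X ^+ j)^-1 = Y^-1.
Proof.
move=> jk; rewrite conjgE invgK mulgA (conjgC (X ^+ j)) conjY_cycle ?mem_cycle //.
by rewrite -mulgA -invMg -expgD addnn -muln2 jk XkY2 expg2 invMg mulKVg.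
Qed.

End DicyclicRelations.

Record dicyclic (k : nat) := Dicyclic { dicyclic_val : 'Z_(k.*2) * bool }.
HB.instance Definition _ k := [isNew for @dicyclic_val k].
HB.instance Definition _ k := [Finite of dicyclic k by <:].

Section DicyclicModel.
Variable k : nat.
Import GRing.Theory.
Local Open Scope ring_scope.

Let kZ : 'Z_(k.*2) := k%:R.

Let kZ_double : kZ + kZ = 0.
Proof. by rewrite -natrD addnn; case: k => [|k'] //=; rewrite pchar_Zp. Qed.

Let kZ_opp : - kZ = kZ.
Proof. by apply/eqP; rewrite eq_sym -addr_eq0 kZ_double. Qed.

(* (i, e) stands for X^i Y^e in Q_{4k}: moving Y past X^j inverts it, and Y^2 = X^k. *)
Definition dicyclic_mul (g h : dicyclic k) : dicyclic k :=
  let: Dicyclic (i, e) := g in let: Dicyclic (j, f) := h in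
  Dicyclic (i + (if e then - j else j) + (if e && f then kZ else 0), e (+) f).

Definition dicyclic_one : dicyclic k := Dicyclic (0, false).

Definition dicyclic_inv (g : dicyclic k) : dicyclic k :=
  let: Dicyclic (i, e) := g in
  if e then Dicyclic (i + kZ, true) else Dicyclic (- i, false).

Lemma dicyclic_mulA : associative dicyclic_mul.
Proof.
move=> [[i [] ]] [[j [] ]] [[l [] ]] //=; congr Dicyclic; congr pair;
  first [ring | rewrite -{1}kZ_opp; ring].
Qed.

Lemma dicyclic_mul1 : left_id dicyclic_one dicyclic_mul.
Proof. by move=> [[i e]] /=; rewrite add0r addr0. Qed.

Lemma dicyclic_mulV : left_inverse dicyclic_one dicyclic_inv dicyclic_mul.
Proof.
move=> [[i [] ]] /=; congr Dicyclic; congr pair; last by ring.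
by rewrite -kZ_double; ring.
Qed.

End DicyclicModel.

HB.instance Definition _ k :=
  Finite_isGroup.Build (dicyclic k) (@dicyclic_mulA k) (@dicyclic_mul1 k) (@dicyclic_mulV k).

Section DicyclicModelGens.
Variable k : nat.
Import GRing.Theory.

Let X : dicyclic k := Dicyclic (1%R, false).
Let Y : dicyclic k := Dicyclic (0%R, true).

Let mulE (g h : dicyclic k) : g * h = dicyclic_mul g h. Proof. by []. Qed.

Let expX j : X ^+ j = Dicyclic ((j%:R)%R, false).
Proof.
elim: j => [|j IHj] //; rewrite expgS IHj mulE /=.
by congr Dicyclic; rewrite addr0 -mulrS.
Qed.

Lemma dicyclic_model_homg :
  [set: dicyclic k] \homg Grp (x : y : (x ^+ k = y ^+ 2, x ^ y^-1 = x^-1)).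
Proof.
apply/dicyclic_homgP; exists X, Y; split.
- apply/eqP; rewrite eqEsubset subsetT; apply/subsetP => -[[i e]] _.
  have -> : Dicyclic (i, e) = X ^+ i * Y ^+ e.
    rewrite expX; case: e; rewrite ?expg1 ?expg0 ?mulg1 ?mulE /= ?addr0 natr_Zp //.
  by rewrite groupM ?groupX // mem_gen // inE cycle_id ?orbT.
- by rewrite expX expgS expg1 mulE /= subrr add0r.
- by rewrite conjgE invgK !mulE /=; congr Dicyclic; congr pair; ring.
Qed.

Lemma card_dicyclic_model : 0 < k -> #|[set: dicyclic k]| = (k * 4)%N.
Proof.
move=> k_gt0; have valK : cancel (@dicyclic_val k) (@Dicyclic k) by case.
rewrite cardsT (bij_eq_card (Bijective valK (fun _ => erefl))).
by rewrite card_prod card_bool card_ord Zp_cast -?muln2 -?mulnA //; lia.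
Qed.

End DicyclicModelGens.

Lemma card_dicyclic_presentation (gT : finGroupType) (G : {group gT}) k : 0 < k ->
  G \isog Grp (x : y : (x ^+ k = y ^+ 2, x ^ y^-1 = x^-1)) -> #|G| = (k * 4)%N.
Proof.
move=> k_gt0 isoG; apply/eqP; rewrite eqn_leq; apply/andP; split.
  have /dicyclic_homgP[X [Y [<- XkY2 XY]]] := isoGrp_hom isoG.
  apply: leq_trans (card_dicyclic_le XkY2 XY) _.
  have : #[X] <= k * 2 by apply: dvdn_leq (order_X_dvd XkY2 XY); rewrite muln_gt0 k_gt0.
  lia.
rewrite -(card_dicyclic_model k_gt0) dvdn_leq ?cardG_gt0 // card_homg //.
by rewrite isoG dicyclic_model_homg.
Qed.

Lemma mem_joing_cycles2 (gT : finGroupType) (g h : gT) :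
  g \in <[g]> <*> <[h]> /\ h \in <[g]> <*> <[h]>.
Proof. by rewrite -!cycle_subG; split; [apply: joing_subl | apply: joing_subr]. Qed.

Lemma mem_joing_cycles3 (gT : finGroupType) (g h l : gT) :
  [/\ g \in <[g]> <*> <[h]> <*> <[l]>, h \in <[g]> <*> <[h]> <*> <[l]>
    & l \in <[g]> <*> <[h]> <*> <[l]>].
Proof.
have [gK hK] := mem_joing_cycles2 g h; have sK := joing_subl (<[g]> <*> <[h]>) <[l]>.
by split; [apply: (subsetP sK) .. | rewrite -cycle_subG joing_subr].
Qed.

Lemma mem_coprime_expg (gT : finGroupType) (K : {group gT}) g p q :
  coprime p q -> g ^+ p \in K -> g ^+ q \in K -> g \in K.
Proof.
case: p => [|p] co_pq Kgp Kgq.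
  by move: co_pq Kgq; rewrite /coprime gcd0n => /eqP->; rewrite expg1.
have [kp kq def_pq _] := egcdnP q (ltn0Sn p).
have -> : g = (g ^+ (kq * q))^-1 * g ^+ (kp * p.+1).
  by rewrite def_pq (eqP co_pq) addn1 expgSr mulKg.
by rewrite groupM ?groupV // mulnC expgM groupX.
Qed.

Lemma cent1_conjg (gT : finGroupType) (u g : gT) : (g \in 'C[u]) = (u ^ g == u).
Proof. by rewrite cent1C cent1E conjgC (inj_eq (mulgI g)). Qed.

Lemma expg_eqmod (gT : finGroupType) (u : gT) m a c :
  u ^+ m = 1 -> a = c %[mod m] -> u ^+ a = u ^+ c.
Proof. by move=> um eq_ac; rewrite -(expg_mod a um) eq_ac expg_mod. Qed.

Lemma expg_eqmodN1 (gT : finGroupType) (u : gT) m a :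
  u ^+ m = 1 -> a.+1 = 0 %[mod m] -> u ^+ a = u^-1.
Proof. by move=> um ha; apply: (mulgI u); rewrite mulgV -expgS (expg_eqmod um ha). Qed.

Lemma order_eqmod1 (gT : finGroupType) (u : gT) a : u ^+ a = u -> a = 1 %[mod #[u]].
Proof. by move=> ua; apply/eqP; rewrite -eq_expg_mod_order ua expg1. Qed.

Lemma order_eqmodN1 (gT : finGroupType) (u : gT) a :
  u ^+ a = u^-1 -> a.+1 = 0 %[mod #[u]].
Proof. by move=> ua; apply/eqP; rewrite -eq_expg_mod_order expgS ua mulgV expg0. Qed.

Lemma double_odd_mod4 m : odd m -> (2 * m = 2 %[mod 4])%N.
Proof. by move=> m_odd; rewrite -[m in LHS]odd_double_half m_odd; lia. Qed.

Lemma commute_conjV (gT : finGroupType) (u g : gT) : u ^ g^-1 = u -> commute g u.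
Proof. by move=> ug; apply/cent1P; rewrite -groupV cent1_conjg ug. Qed.

Section SemidirectRelations.
Variables (gT : finGroupType) (u x y : gT) (N m a b : nat).
Hypotheses (um : u ^+ m = 1) (xNy2 : x ^+ N = y ^+ 2) (xy : x ^ y^-1 = x^-1).
Hypotheses (ux : u ^ x^-1 = u ^+ a) (uy : u ^ y^-1 = u ^+ b).

Let K := <[u]> <*> <[x]> <*> <[y]>.

Lemma card_semidirect_le : #|K| <= #[u] * (2 * #[x]).
Proof.
have nUg g c : u ^ g^-1 = u ^+ c -> g \in 'N(<[u]>).
  by move=> ug; rewrite -groupV inE -cycleJ ug cycle_subG mem_cycle.
have nUxy : <[x]> <*> <[y]> \subset 'N(<[u]>).
  by rewrite join_subG !cycle_subG (nUg _ _ ux) (nUg _ _ uy).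
rewrite /K -joingA norm_joinEr //.
apply: leq_trans (_ : _ <= #[u] * #|<[x]> <*> <[y]>|) _.
  by rewrite mul_cardG leq_pmulr ?cardG_gt0.
by rewrite leq_mul // (card_dicyclic_le xNy2 xy).
Qed.

Hypotheses (m_odd : odd m) (coNm : coprime (N * 2) m).

Let y2m : y ^+ (2 * m) = y ^+ 2.
Proof. exact: expg_eqmod (expY4 xNy2 xy) (double_odd_mod4 m_odd). Qed.

Let uNm : u ^+ (N * m) = 1.
Proof. by rewrite mulnC expgM um expg1n. Qed.

Lemma semidirect_dicyclic_homg_1N1 : a = 1 %[mod m] -> b.+1 = 0 %[mod m] ->
  K \homg Grp (x : y : (x ^+ (N * m) = y ^+ 2, x ^ y^-1 = x^-1)).
Proof.
move=> ha hb; have [Ku Kx Ky] := mem_joing_cycles3 u x y.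
have cxu : commute x u by apply: commute_conjV; rewrite ux (expg_eqmod um ha).
apply/dicyclic_homgP; exists (x * u), y; split.
- have [Lxu Ly] := mem_joing_cycles2 (x * u) y.
  have Lu : u \in <[x * u]> <*> <[y]>.
    apply: (mem_coprime_expg coNm) (_ : u ^+ m \in _); last by rewrite um group1.
    by rewrite -[u ^+ _]mul1g -(expX_k2 xNy2 xy) -expgMn // groupX.
  have Lx : x \in <[x * u]> <*> <[y]> by have := groupM Lxu (groupVr Lu); rewrite mulgK.
  by apply/eqP; rewrite eqEsubset !join_subG !cycle_subG groupM ?Kx ?Ku ?Ky ?Lu ?Lx ?Ly.
- by rewrite expgMn // uNm mulg1 expgM xNy2 -expgM y2m.
- by rewrite conjMg xy uy (expg_eqmodN1 um hb) -invMg cxu.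
Qed.

Hypothesis N2 : N = 2.

Let co4m : coprime 4 m.
Proof. by have := coNm; rewrite N2. Qed.

Let ux_inv : a.+1 = 0 %[mod m] -> u ^ x^-1 = u^-1.
Proof. by move=> ha; rewrite ux (expg_eqmodN1 um ha). Qed.

Lemma semidirect_dicyclic_homg_N11 : a.+1 = 0 %[mod m] -> b = 1 %[mod m] ->
  K \homg Grp (x : y : (x ^+ (N * m) = y ^+ 2, x ^ y^-1 = x^-1)).
Proof.
move=> ha hb; have [Ku Kx Ky] := mem_joing_cycles3 u x y.
have cyu : commute y u by apply: commute_conjV; rewrite uy (expg_eqmod um hb).
have yx : y ^ x^-1 = y^-1 by rewrite -[x in x^-1]expg1 (conjVX_Y xNy2 xy) ?N2.
apply/dicyclic_homgP; exists (y * u), x; split.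
- have [Lyu Lx] := mem_joing_cycles2 (y * u) x.
  have Lu : u \in <[y * u]> <*> <[x]>.
    apply: (mem_coprime_expg co4m) (_ : u ^+ m \in _); last by rewrite um group1.
    by rewrite -[u ^+ _]mul1g -(expY4 xNy2 xy) -expgMn // groupX.
  have Ly : y \in <[y * u]> <*> <[x]> by have := groupM Lyu (groupVr Lu); rewrite mulgK.
  by apply/eqP; rewrite eqEsubset !join_subG !cycle_subG groupM ?Kx ?Ku ?Ky ?Lu ?Lx ?Ly.
- by rewrite expgMn // uNm mulg1 N2 y2m -xNy2 N2.
- by rewrite conjMg yx ux_inv // -invMg cyu.
Qed.

Lemma semidirect_dicyclic_homg_N1N1 : a.+1 = 0 %[mod m] -> b.+1 = 0 %[mod m] ->
  K \homg Grp (x : y : (x ^+ (N * m) = y ^+ 2, x ^ y^-1 = x^-1)).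
Proof.
move=> ha hb; have [Ku Kx Ky] := mem_joing_cycles3 u x y.
have cxyu : commute (x * y) u.
  apply: commute_conjV; rewrite invMg conjgM uy (expg_eqmodN1 um hb).
  by rewrite conjVg ux_inv ?invgK.
have xy2 : (x * y) ^+ 2 = x ^+ 2 by rewrite (expg2_cosetY xNy2 xy (cycle_id x)) N2.
have xy4 : (x * y) ^+ 4 = 1 by rewrite (expgM _ 2 2) xy2 -expgM -(expX_k2 xNy2 xy) N2.
apply/dicyclic_homgP; exists (x * y * u), x; split.
- have [Lxyu Lx] := mem_joing_cycles2 (x * y * u) x.
  have Lu : u \in <[x * y * u]> <*> <[x]>.
    apply: (mem_coprime_expg co4m) (_ : u ^+ m \in _); last by rewrite um group1.
    by rewrite -[u ^+ _]mul1g -xy4 -expgMn // groupX.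
  have Lxy : x * y \in <[x * y * u]> <*> <[x]>.
    by have := groupM Lxyu (groupVr Lu); rewrite mulgK.
  have Ly : y \in <[x * y * u]> <*> <[x]>.
    by have := groupM (groupVr Lx) Lxy; rewrite mulKg.
  by apply/eqP; rewrite eqEsubset !join_subG !cycle_subG !groupM ?Kx ?Ku ?Ky ?Lu ?Lx ?Ly.
- by rewrite expgMn // uNm mulg1 N2 (expg_eqmod xy4 (double_odd_mod4 m_odd)).
- have yVxV : y^-1 * x^-1 = x * y^-1 by rewrite -xy conjgE invgK mulKg.
  rewrite !conjMg ux_inv // (conjg_cycle (groupVr (cycle_id x)) (cycle_id x)).
  by rewrite (conjVX_Y xNy2 xy (j := 1)) ?N2 // -yVxV -!invMg cxyu.
Qed.

End SemidirectRelations.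

Section DicyclicToSemidirect.
Variables (gT : finGroupType) (X Y : gT) (N m a b : nat).
Hypotheses (XY2 : X ^+ (N * m) = Y ^+ 2) (XY : X ^ Y^-1 = X^-1) (coNm : coprime (N * 2) m).

Let L := <[X]> <*> <[Y]>.

Lemma dicyclic_semidirect_homg_1N1 : a = 1 %[mod m] -> b.+1 = 0 %[mod m] ->
  L \homg Grp (u : x : y : (u ^+ m = 1, x ^+ N = y ^+ 2, x ^ y^-1 = x^-1,
                           u ^ x^-1 = u ^+ a, u ^ y^-1 = u ^+ b)).
Proof.
move=> ha hb; have [LX LY] := mem_joing_cycles2 X Y.
have Xu : X ^+ (N * 2) \in <[X]> := mem_cycle X _.
have um : X ^+ (N * 2) ^+ m = 1 by rewrite -expgM mulnAC (expX_k2 XY2 XY).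
apply/semidirect_homgP; exists (X ^+ (N * 2)), (X ^+ m), Y; split; last split => //.
- have [Ku Kx KY] := mem_joing_cycles3 (X ^+ (N * 2)) (X ^+ m) Y.
  have KX := mem_coprime_expg coNm Ku Kx.
  by apply/eqP; rewrite eqEsubset !join_subG !cycle_subG !groupX ?LX ?LY ?KX ?KY.
- by rewrite -expgM mulnC XY2.
- by rewrite (conjVY_cycle XY) ?mem_cycle.
- by rewrite (conjg_cycle (groupVr (mem_cycle X m)) Xu) (expg_eqmod um ha).
- by rewrite (conjVY_cycle XY Xu) (expg_eqmodN1 um hb).
Qed.

Hypothesis N2 : N = 2.

Let co4m : coprime 4 m.
Proof. by have := coNm; rewrite N2. Qed.

Let X2mY2 : X ^+ (2 * m) = Y ^+ 2.
Proof. by rewrite -XY2 N2. Qed.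

Let X4m : X ^+ 4 ^+ m = 1.
Proof. by rewrite -expgM -(expX_k2 XY2 XY) N2 mulnAC. Qed.

Let X4Y : X ^+ 4 ^ Y^-1 = (X ^+ 4)^-1.
Proof. by rewrite (conjVY_cycle XY) ?mem_cycle. Qed.

Let YXm : Y ^ (X ^+ m)^-1 = Y^-1.
Proof. by rewrite (conjVX_Y XY2 XY) // N2 mulnC. Qed.

Lemma dicyclic_semidirect_homg_N11 : a.+1 = 0 %[mod m] -> b = 1 %[mod m] ->
  L \homg Grp (u : x : y : (u ^+ m = 1, x ^+ N = y ^+ 2, x ^ y^-1 = x^-1,
                           u ^ x^-1 = u ^+ a, u ^ y^-1 = u ^+ b)).
Proof.
move=> ha hb; have [LX LY] := mem_joing_cycles2 X Y.
apply/semidirect_homgP; exists (X ^+ 4), Y, (X ^+ m); split; last split => //.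
- have [Ku KY Kx] := mem_joing_cycles3 (X ^+ 4) Y (X ^+ m).
  have KX := mem_coprime_expg co4m Ku Kx.
  by apply/eqP; rewrite eqEsubset !join_subG !cycle_subG !groupX ?LX ?LY ?KX ?KY.
- by rewrite N2 -expgM mulnC X2mY2.
- by rewrite X4Y (expg_eqmodN1 X4m ha).
- by rewrite (conjg_cycle (groupVr (mem_cycle X m)) (mem_cycle X 4)) (expg_eqmod X4m hb).
Qed.

Lemma dicyclic_semidirect_homg_N1N1 : a.+1 = 0 %[mod m] -> b.+1 = 0 %[mod m] ->
  L \homg Grp (u : x : y : (u ^+ m = 1, x ^+ N = y ^+ 2, x ^ y^-1 = x^-1,
                           u ^ x^-1 = u ^+ a, u ^ y^-1 = u ^+ b)).
Proof.
move=> ha hb; have [LX LY] := mem_joing_cycles2 X Y.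
apply/semidirect_homgP; exists (X ^+ 4), Y, (X ^+ m * Y); split; last split => //.
- have [Ku KY KxY] := mem_joing_cycles3 (X ^+ 4) Y (X ^+ m * Y).
  have Kx : X ^+ m \in <[X ^+ 4]> <*> <[Y]> <*> <[X ^+ m * Y]>.
    by have := groupM KxY (groupVr KY); rewrite mulgK.
  have KX := mem_coprime_expg co4m Ku Kx.
  by apply/eqP; rewrite eqEsubset !join_subG !cycle_subG !groupM ?groupX ?LX ?LY ?KX ?KY.
- by rewrite (expg2_cosetY XY2 XY (mem_cycle X m)) XY2 N2.
- by rewrite invMg conjgM (conjg_cycle (groupVr (cycle_id Y)) (cycle_id Y)) YXm.
- by rewrite X4Y (expg_eqmodN1 X4m ha).
- rewrite invMg conjgM X4Y conjVg (conjg_cycle (groupVr (mem_cycle X m)) (mem_cycle X 4)).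
  by rewrite (expg_eqmodN1 X4m hb).
Qed.

End DicyclicToSemidirect.

Definition admissible_twist (N m a b : nat) : Prop :=
  if N == 2 then
    [\/ (a = 1 %[mod m])%N /\ (b.+1 = 0 %[mod m])%N,
        (a.+1 = 0 %[mod m])%N /\ (b = 1 %[mod m])%N |
        (a.+1 = 0 %[mod m])%N /\ (b.+1 = 0 %[mod m])%N]
  else (a = 1 %[mod m])%N /\ (b.+1 = 0 %[mod m])%N.

Lemma dicyclic_semidirect_homg (gT : finGroupType) (G : {group gT}) N m a b :
    coprime (N * 2) m -> admissible_twist N m a b ->
    G \homg Grp (x : y : (x ^+ (N * m) = y ^+ 2, x ^ y^-1 = x^-1)) ->
  G \homg Grp (u : x : y : (u ^+ m = 1, x ^+ N = y ^+ 2, x ^ y^-1 = x^-1,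
                           u ^ x^-1 = u ^+ a, u ^ y^-1 = u ^+ b)).
Proof.
move=> coNm adm /dicyclic_homgP[X [Y [<- XY2 XY]]].
move: adm; rewrite /admissible_twist; case: eqP => [N2 [] [ha hb] | _ [ha hb]].
- exact: dicyclic_semidirect_homg_1N1.
- exact: dicyclic_semidirect_homg_N11.
- exact: dicyclic_semidirect_homg_N1N1.
- exact: dicyclic_semidirect_homg_1N1.
Qed.

Lemma semidirect_dicyclic_homg (gT : finGroupType) (H : {group gT}) N m a b :
    odd m -> coprime (N * 2) m -> admissible_twist N m a b ->
    H \homg Grp (u : x : y : (u ^+ m = 1, x ^+ N = y ^+ 2, x ^ y^-1 = x^-1,
                             u ^ x^-1 = u ^+ a, u ^ y^-1 = u ^+ b)) ->
  H \homg Grp (x : y : (x ^+ (N * m) = y ^+ 2, x ^ y^-1 = x^-1)).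
Proof.
move=> m_odd coNm adm /semidirect_homgP[u [x [y [<- [um xNy2 xy ux uy]]]]].
move: adm; rewrite /admissible_twist; case: eqP => [N2 [] [ha hb] | _ [ha hb]].
- exact: semidirect_dicyclic_homg_1N1 _ _ _ ux uy _ _ ha hb.
- exact: semidirect_dicyclic_homg_N11 _ _ _ ux uy _ _ _ ha hb.
- exact: semidirect_dicyclic_homg_N1N1 _ _ _ ux uy _ _ _ ha hb.
- exact: semidirect_dicyclic_homg_1N1 _ _ _ ux uy _ _ ha hb.
Qed.

Section SemidirectAsDicyclic.
Variables (gT : finGroupType) (u x y X Y : gT) (N m a b : nat).
Hypotheses (um : u ^+ m = 1) (xNy2 : x ^+ N = y ^+ 2) (xy : x ^ y^-1 = x^-1).
Hypotheses (ux : u ^ x^-1 = u ^+ a) (uy : u ^ y^-1 = u ^+ b).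
Hypotheses (XY2 : X ^+ (N * m) = Y ^+ 2) (XY : X ^ Y^-1 = X^-1).
Hypotheses (N_gt1 : 1 < N) (m_odd : odd m).

Let K := <[u]> <*> <[x]> <*> <[y]>.
Hypotheses (defK : <[X]> <*> <[Y]> = K) (cardK : N * m * 4 <= #|K|).

Let K_gens : [/\ u \in <[X]> <*> <[Y]>, x \in <[X]> <*> <[Y]> & y \in <[X]> <*> <[Y]>].
Proof. by rewrite defK; apply: mem_joing_cycles3. Qed.

Lemma order_semidirect_gens : #[u] = m /\ #[x] = (N * 2)%N.
Proof.
have m_gt0 : 0 < m by case: m m_odd.
have ou : #[u] <= m by apply: dvdn_leq; rewrite ?order_dvdn ?um.
have ox : #[x] <= N * 2 by apply: dvdn_leq (order_X_dvd xNy2 xy); lia.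
have := leq_trans cardK (card_semidirect_le xNy2 xy ux uy); nia.
Qed.

Lemma semidirect_u_in_cycleX : u \in <[X]>.
Proof.
have [Ku _ _] := K_gens.
by apply: (odd_order_mem_cycle XY2 XY Ku); rewrite (proj1 order_semidirect_gens).
Qed.

Lemma semidirect_twist_pm1 g c : g \in K -> u ^ g^-1 = u ^+ c ->
  (c = 1 %[mod m])%N \/ (c.+1 = 0 %[mod m])%N.
Proof.
rewrite -defK -(proj1 order_semidirect_gens) => Kg ug.
have [] := conj_cycle_dicyclic XY2 XY (groupVr Kg) semidirect_u_in_cycleX; rewrite ug.
  by left; apply: order_eqmod1.
by right; apply: order_eqmodN1.
Qed.

Lemma semidirect_twist_nontrivial :
  1 < m -> ~ ((a = 1 %[mod m])%N /\ (b = 1 %[mod m])%N).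
Proof.
move=> m_gt1 [ha hb].
have cKu : <[X]> <*> <[Y]> \subset 'C[u].
  rewrite defK !join_subG !cycle_subG cent1id.
  apply/andP; split; apply/cent1P/commute_conjV.
    by rewrite ux (expg_eqmod um ha).
  by rewrite uy (expg_eqmod um hb).
have : u ^ Y^-1 = u.
  by apply/eqP; rewrite -cent1_conjg (subsetP cKu) // groupV (proj2 (mem_joing_cycles2 X Y)).
rewrite (conjVY_cycle XY semidirect_u_in_cycleX) => uVu.
have : #[u] %| 2 ^ 1 by rewrite order_dvdn expgS expg1 -{1}uVu mulVg.
move/(odd_dvdn_pow2 _); rewrite (proj1 order_semidirect_gens) => /(_ m_odd); lia.
Qed.

Lemma semidirect_twist_x_trivial : N != 2 -> (a = 1 %[mod m])%N.
Proof.
move=> N_neq2; rewrite -(proj1 order_semidirect_gens); apply: order_eqmod1; rewrite -ux.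
have [_ Kx _] := K_gens.
case/(mem_dicyclic XY2 XY): Kx => [Xx | [c Xc def_x]].
  exact: conjg_cycle (groupVr Xx) semidirect_u_in_cycleX.
have : #[x] %| 4.
  by rewrite order_dvdn def_x (expgM _ 2 2) (expg2_cosetY XY2 XY Xc) -expgM (expX_k2 XY2 XY).
by rewrite (proj2 order_semidirect_gens) => /dvdn_leq; lia.
Qed.

Lemma semidirect_twist_admissible : 1 < m -> admissible_twist N m a b.
Proof.
move=> m_gt1; have not11 := semidirect_twist_nontrivial m_gt1.
have [_ Kx Ky] := mem_joing_cycles3 u x y.
rewrite /admissible_twist; case: eqP => [_ | /eqP N_neq2].
  have [ha|ha] := semidirect_twist_pm1 Kx ux; have [hb|hb] := semidirect_twist_pm1 Ky uy;
    by [case: not11 | constructor 1 | constructor 2 | constructor 3].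
have ha := semidirect_twist_x_trivial N_neq2; split=> //.
by have [hb|//] := semidirect_twist_pm1 Ky uy; case: not11.
Qed.

End SemidirectAsDicyclic.

Lemma semidirect_dicyclic_admissible (gT : finGroupType) (H : {group gT}) N m a b :
    1 < N -> odd m ->
    H \homg Grp (x : y : (x ^+ (N * m) = y ^+ 2, x ^ y^-1 = x^-1)) ->
    H \homg Grp (u : x : y : (u ^+ m = 1, x ^+ N = y ^+ 2, x ^ y^-1 = x^-1,
                             u ^ x^-1 = u ^+ a, u ^ y^-1 = u ^+ b)) ->
    N * m * 4 <= #|H| ->
  admissible_twist N m a b.
Proof.
move=> N_gt1 m_odd /dicyclic_homgP[X [Y [defH XY2 XY]]].
case/semidirect_homgP=> u [x [y [defK [um xNy2 xy ux uy]]]] cardH.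
have [m_le1 | m_gt1] := leqP m 1.
  have -> : m = 1%N by case: m m_odd m_le1 {defK um XY2 cardH} => [|[|]].
  by rewrite /admissible_twist !modn1; case: ifP => _; [constructor 1 |].
apply: (semidirect_twist_admissible um xNy2 xy ux uy XY2 XY) => //.
  by rewrite defH defK.
by rewrite defK.
Qed.

Theorem lemma1p8 (n m a b : nat)
  (gT hT : finGroupType) (G : {group gT}) (H : {group hT}) :
  3 <= n -> 1 <= m -> odd m ->
  (a ^ 2 = 1 %[mod m])%N -> (b ^ 2 = 1 %[mod m])%N ->
  G \isog Grp (x : y : (x ^+ (2 ^ (n - 2) * m) = y ^+ 2, x ^ y^-1 = x^-1)) ->
  H \isog Grp (u : x : y : (u ^+ m = 1, x ^+ (2 ^ (n - 2)) = y ^+ 2,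
                          x ^ y^-1 = x^-1, u ^ x^-1 = u ^+ a,
                          u ^ y^-1 = u ^+ b)) ->
  (G \isog H <->
   (if n == 3 then
      [\/ (a = 1 %[mod m])%N /\ (b.+1 = 0 %[mod m])%N,
          (a.+1 = 0 %[mod m])%N /\ (b = 1 %[mod m])%N |
          (a.+1 = 0 %[mod m])%N /\ (b.+1 = 0 %[mod m])%N]
    else (a = 1 %[mod m])%N /\ (b.+1 = 0 %[mod m])%N)).
Proof.
move=> n_ge3 m_gt0 m_odd _ _ isoG isoH.
have N_gt1 : 1 < 2 ^ (n - 2) by rewrite (ltn_exp2l 0) // subn_gt0.
have coNm : coprime (2 ^ (n - 2) * 2) m by rewrite -expnSr coprimeXl // coprime2n.
have N2E : (2 ^ (n - 2) == 2)%N = (n == 3) by rewrite -[X in _ == X]expn1 eqn_exp2l //; lia.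
rewrite -N2E -/(admissible_twist (2 ^ (n - 2)) m a b).
split=> [isoGH | adm].
  apply: semidirect_dicyclic_admissible N_gt1 m_odd _ (isoGrp_hom isoH) _.
    by rewrite -(eq_homGrp _ isoGH) (isoGrp_hom isoG).
  by rewrite -(card_isog isoGH) (card_dicyclic_presentation _ isoG) // muln_gt0 expn_gt0.
rewrite isogEhom isoH isoG (dicyclic_semidirect_homg coNm adm (isoGrp_hom isoG)).
exact: semidirect_dicyclic_homg m_odd coNm adm (isoGrp_hom isoH).
Qed.
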